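(* Let $N\ge 1$ and let $(A_N,H_N,D_N)$ be the fuzzy sphere spectral triple described in the context. Then the module of one-forms $\mathcal{E}=\Omega^1(A_N)$ is a free right $A_N$-module of rank $3$ with basis the central elements $1\otimes\sigma_1,\ 1\otimes\sigma_2,\ 1\otimes\sigma_3$.
   Context: Let $J_1,J_2,J_3$ be a basis of the Lie algebra $su(2)$ with $[J_k,J_l]=\sum_{m=1}^3\epsilon_{klm}J_m$ ($\epsilon$ the totally antisymmetric symbol, $\epsilon_{123}=1$). For $n\ge0$ let $\rho_{n/2}$ be the $(n+1)$-dimensional irreducible unitary representation of $su(2)$ on $\mathbb{C}^{n+1}$ (so each $\rho_{n/2}(J_k)$ is skew-Hermitian). Let $K_N=\oplus_{n=0}^N\mathbb{C}^{n+1}$, $X_k=\oplus_{n=0}^N\rho_{n/2}(J_k)\in B(K_N)$, $A_N=B(K_N)$, $H_N=K_N\otimes_{\mathbb{C}}\mathbb{C}^2$ with $a\in A_N$ acting as $a\otimes 1$. Let $\tau_1,\tau_2,\tau_3$ be the Pauli matrices, $\sigma_k=\sqrt{-1}\,\tau_k$, and $D_N=\sum_{k=1}^3X_k\otimes\sigma_k$; identify $B(H_N)=A_N\otimes_{\mathbb{C}}M_2(\mathbb{C})$. The one-forms of the spectral triple are $\Omega^1(A_N)=\{\sum_ja_j[D_N,b_j]:a_j,b_j\in A_N\}\subseteq A_N\otimes M_2(\mathbb{C})$, an $A_N$-bimodule, with $da=[D_N,a]$. *)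

(* Complex numbers are modelled by algC (algebraic complex
   numbers), which contains all matrix entries of the spin representations. *)
From mathcomp Require Import all_boot all_order all_algebra all_field.
From mathcomp Require Export mxtens.
Unset Printing Implicit Defensive.
Import GRing.Theory Num.Theory.
Local Open Scope ring_scope.

(* totally antisymmetric symbol on indices 'I_3 = {0,1,2} (stand for 1,2,3),
   with eps 0 1 2 = 1 *)
Definition eps (k l m : 'I_3) : algC :=
  if [&& k != l, l != m & k != m] then
    (if ((l + 3 - k) %% 3 == 1)%N then 1 else -1)
  else 0.

Definition adjmx {n} (M : 'M[algC]_n) : 'M[algC]_n := map_mx Num.conj M^T.

Definition su2_unitary_rep {n} (X : 'I_3 -> 'M[algC]_n) : Prop :=
  (forall k, adjmx (X k) = - X k) /\
  (forall k l, X k *m X l - X l *m X k = \sum_(m < 3) eps k l m *: X m).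

(* irreducibility for the action on column vectors: every subspace of C^n
   (spanned by the columns of U, i.e. the rows of U^T) invariant under all
   X_k is 0 or everything *)
Definition irreducible_rep {n} (X : 'I_3 -> 'M[algC]_n) : Prop :=
  forall U : 'M[algC]_n,
    (forall k, stablemx U (X k)^T) -> (\rank U == 0)%N || (\rank U == n)%N.

Definition dimK (N : nat) : nat := \sum_(i < N.+1) i.+1.

Notation AN N := ('M[algC]_(dimK N)).
(* B(H_N) = A_N (x) M_2(C), realised by Kronecker products *)
Notation BH N := ('M[algC]_(dimK N * 2)).

(* X_k = (+)_{n=0}^N rho_{n/2}(J_k) *)
Definition Xsum (N : nat) (rho : forall n : nat, 'I_3 -> 'M[algC]_n.+1)
  (k : 'I_3) : AN N :=
  \mxdiag_(i < N.+1) rho (nat_of_ord i) k.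

(* Pauli matrices tau_1, tau_2, tau_3 (indexed 0,1,2) and sigma_k = i tau_k *)
Definition tau (k : 'I_3) : 'M[algC]_2 :=
  if k == 0 :> nat then \matrix_(i < 2, j < 2) (if i == j then 0 else 1)
  else if k == 1 :> nat then
    \matrix_(i < 2, j < 2)
      (if i == j then 0 else if i == 0 :> nat then - 'i else 'i)
  else \matrix_(i < 2, j < 2)
      (if i == j then (if i == 0 :> nat then 1 else -1) else 0).
Definition sigma (k : 'I_3) : 'M[algC]_2 := 'i *: tau k.

Definition act {N} (a : AN N) : BH N := a *t (1%:M : 'M[algC]_2).
Definition esig N (k : 'I_3) : BH N := (1%:M : AN N) *t sigma k.

Definition Dirac N rho : BH N := \sum_(k < 3) Xsum N rho k *t sigma k.

Definition dform N rho (a : AN N) : BH N :=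
  Dirac N rho *m act a - act a *m Dirac N rho.

Definition one_form N rho (w : BH N) : Prop :=
  exists (m : nat) (a b : 'I_m -> AN N),
    w = \sum_(j < m) act (a j) *m dform N rho (b j).

(* Since D_N = sum_k X_k (x) sigma_k and a (x) 1 commutes with 1 (x) sigma_k, a one-form
   sum_j a_j [D_N, b_j] equals sum_k (1 (x) sigma_k)(c_k (x) 1) with
   c_k = sum_j a_j [X_k, b_j]; freeness is the linear independence of the sigma_k.
   Conversely, the families (c_k) arising this way form a left A_N-module which contains
   (X_k(p', p) E_st)_k for every matrix unit E_st, because X_k vanishes on the spin-0
   summand.  The spin-1/2 summand makes the X_k linearly independent, so a dual basis for
   them turns these families into all of A_N^3. *)

From mathcomp Require Import all_boot all_order all_algebra all_field.
From mathcomp Require Import ring.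
Set Implicit Arguments.
Unset Strict Implicit.
Import GRing.Theory Num.Theory.
Local Open Scope ring_scope.

Definition mx_lin_indep {R : pzRingType} {m p q : nat} (S : 'I_m -> 'M[R]_(p, q)) : Prop :=
  forall c : 'I_m -> R, \sum_k c k *: S k = 0 -> forall k, c k = 0.

Section Commutator.
Variables (R : comPzRingType) (n : nat).

Definition mxcomm (A B : 'M[R]_n) : 'M[R]_n := A *m B - B *m A.

Lemma mxcommxx A : mxcomm A A = 0.
Proof. exact: subrr. Qed.

Lemma mxcommC A B : mxcomm A B = - mxcomm B A.
Proof. by rewrite /mxcomm opprB. Qed.

Lemma mxcomm0r A : mxcomm A 0 = 0.
Proof. by rewrite /mxcomm mulmx0 mul0mx subrr. Qed.

Lemma mxcomm0l A : mxcomm 0 A = 0.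
Proof. by rewrite mxcommC mxcomm0r oppr0. Qed.

Lemma mxcommDr A B C : mxcomm A (B + C) = mxcomm A B + mxcomm A C.
Proof. by rewrite /mxcomm mulmxDr mulmxDl opprD addrACA. Qed.

Lemma mxcommZr A a B : mxcomm A (a *: B) = a *: mxcomm A B.
Proof. by rewrite /mxcomm -scalemxAr -scalemxAl scalerBr. Qed.

Lemma mulmx_delta_sandwich (A : 'M[R]_n) s p q t :
  delta_mx s p *m A *m delta_mx q t = A p q *: (delta_mx s t : 'M[R]_n).
Proof.
apply/matrixP => i j; rewrite !mxE (bigD1 q) //= big1 ?addr0; last first.
  by move=> c /negPf nc; rewrite !mxE nc /= mulr0.
rewrite [delta_mx q t q j]mxE eqxx /= [(_ *m _) i q]mxE (bigD1 p) //= big1 ?addr0; last first.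
  by move=> c /negPf nc; rewrite mxE nc andbF mul0r.
rewrite mxE !eqxx andbT.
by case: (i == s); case: (j == t); rewrite /= ?mulr1 ?mul1r ?mulr0 ?mul0r.
Qed.

Lemma mxcomm_delta (Y : 'M[R]_n) (i0 s p' p t : 'I_n) : Y i0 i0 = 0 ->
  Y p' p *: delta_mx s t = delta_mx s p' *m mxcomm Y (delta_mx p t)
     - (p' == p)%:R *: (delta_mx s i0 *m mxcomm Y (delta_mx i0 t)).
Proof.
move=> Y0.
rewrite /mxcomm !mulmxBr !mulmxA !mulmx_delta_sandwich Y0 scale0r add0r.
rewrite mul_delta_mx mul_delta_mx_cond.
by case: (p' == p); rewrite ?scale1r ?scale0r ?mul0mx ?subr0 ?oppr0 ?opprK ?subrK.
Qed.

End Commutator.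

Section BracketSpan.
Variables (F : fieldType) (n m : nat) (X : 'I_m -> 'M[F]_n).

(* The coordinates, in the basis 1 (x) sigma_k, of the one-forms sum_j a_j [D, b_j] of a
   Dirac operator D = sum_k X_k (x) sigma_k. *)
Definition bracket_span (f : 'I_m -> 'M[F]_n) : Prop :=
  exists s : seq ('M[F]_n * 'M[F]_n),
    forall k, f k = \sum_(x <- s) x.1 *m mxcomm (X k) x.2.

Lemma eq_bracket_span f g :
  (forall k, f k = g k) -> bracket_span f -> bracket_span g.
Proof. by move=> fg [s fs]; exists s => k; rewrite -fg. Qed.

Lemma bracket_span1 a b : bracket_span (fun k => a *m mxcomm (X k) b).
Proof. by exists [:: (a, b)] => k; rewrite big_seq1. Qed.

Lemma bracket_span0 : bracket_span (fun _ => 0).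
Proof. by exists [::] => k; rewrite big_nil. Qed.

Lemma bracket_spanD f g :
  bracket_span f -> bracket_span g -> bracket_span (fun k => f k + g k).
Proof. by move=> [s fs] [t gt]; exists (s ++ t) => k; rewrite big_cat fs gt. Qed.

Lemma bracket_spanZ c f : bracket_span f -> bracket_span (fun k => c *: f k).
Proof.
move=> [s fs]; exists [seq (c *: x.1, x.2) | x <- s] => k.
by rewrite fs big_map scaler_sumr; apply: eq_bigr => x _; rewrite scalemxAl.
Qed.

Lemma bracket_spanB f g :
  bracket_span f -> bracket_span g -> bracket_span (fun k => f k - g k).
Proof.
move=> sf /(bracket_spanZ (-1)) sg.
by apply: eq_bracket_span (bracket_spanD sf sg) => k; rewrite scaleN1r.
Qed.

Lemma bracket_span_sum (I : Type) (r : seq I) (f : I -> 'I_m -> 'M[F]_n) :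
  (forall i, bracket_span (f i)) -> bracket_span (fun k => \sum_(i <- r) f i k).
Proof.
move=> sf; elim: r => [|i r IH].
  by apply: eq_bracket_span bracket_span0 => k; rewrite big_nil.
by apply: eq_bracket_span (bracket_spanD (sf i) IH) => k; rewrite big_cons.
Qed.

Lemma row_free_lin_indep :
  mx_lin_indep X -> row_free (\matrix_k mxvec (X k)).
Proof.
move=> indepX; rewrite -kermx_eq0; apply/rowV0P => v /sub_kermxP vX0.
apply/rowP => k; rewrite mxE; apply: indepX => {k}.
apply/matrixP => i j; rewrite summxE [RHS]mxE.
transitivity ((v *m \matrix_k mxvec (X k)) 0 (mxvec_index i j)); last by rewrite vX0 mxE.
by rewrite mxE; apply: eq_bigr => l _; rewrite !mxE mxvecE.
Qed.

Variable i0 : 'I_n.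
Hypotheses (indepX : mx_lin_indep X) (X0 : forall k, X k i0 i0 = 0).

Lemma bracket_span_entry_delta r s t :
  bracket_span (fun k => mxvec (X k) 0 r *: delta_mx s t).
Proof.
case/mxvec_indexP: r => p' p.
apply: eq_bracket_span (bracket_spanB (bracket_span1 (delta_mx s p') (delta_mx p t))
   (bracket_spanZ (p' == p)%:R (bracket_span1 (delta_mx s i0) (delta_mx i0 t)))) => k.
by rewrite mxvecE (mxcomm_delta _ _ _ _ (X0 k)).
Qed.

Lemma bracket_span_delta k0 (c : 'M[F]_n) :
  bracket_span (fun k => (k == k0)%:R *: c).
Proof.
have [D MD] := row_freeP (row_free_lin_indep indepX).
have dual k : (k == k0)%:R = \sum_r mxvec (X k) 0 r * D r k0.
  by move/matrixP/(_ k k0): MD; rewrite !mxE => <-; apply: eq_bigr => r _; rewrite mxE.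
pose coef s t r := bracket_spanZ (c s t * D r k0) (bracket_span_entry_delta r s t).
apply: eq_bracket_span (bracket_span_sum _ (fun s => bracket_span_sum _ (fun t =>
   bracket_span_sum (index_enum _) (coef s t)))) => k.
rewrite [in RHS](matrix_sum_delta c) scaler_sumr; apply: eq_bigr => s _.
rewrite scaler_sumr; apply: eq_bigr => t _.
rewrite scalerA dual mulr_suml scaler_suml; apply: eq_bigr => r _.
by rewrite !scalerA; congr (_ *: _); ring.
Qed.

Lemma bracket_span_all f : bracket_span f.
Proof.
pose fk0 k0 := bracket_span_delta k0 (f k0).
apply: eq_bracket_span (bracket_span_sum (index_enum _) fk0) => k.
rewrite (bigD1 k) //= eqxx scale1r big1 ?addr0 // => j /negPf.
by rewrite eq_sym => ->; rewrite scale0r.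
Qed.

End BracketSpan.

Lemma mxcomm_cycle_eq0 (F : fieldType) n (P Q S : 'M[F]_n) (a b c : F) :
  mxcomm P Q = S -> mxcomm Q S = P -> mxcomm S P = Q ->
  a *: P + b *: Q + c *: S = 0 -> a != 0 -> [/\ P = 0, Q = 0 & S = 0].
Proof.
move=> PQ QS SP comb a_neq0.
have aQ : a *: Q = b *: P.
  have : mxcomm S (a *: P + b *: Q + c *: S) = 0 by rewrite comb mxcomm0r.
  rewrite !mxcommDr !mxcommZr mxcommxx scaler0 addr0.
  by rewrite SP mxcommC QS scalerN => /eqP; rewrite subr_eq0 => /eqP.
have S0 : S = 0.
  apply: (scalerI a_neq0).
  by rewrite scaler0 -PQ -mxcommZr aQ mxcommZr mxcommxx scaler0.
have P0 : P = 0 by rewrite -QS S0 mxcomm0r.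
by split=> //; rewrite -SP S0 mxcomm0l.
Qed.

Definition o0 : 'I_3 := Ordinal (isT : (0 < 3)%N).
Definition o1 : 'I_3 := Ordinal (isT : (1 < 3)%N).
Definition o2 : 'I_3 := Ordinal (isT : (2 < 3)%N).

Lemma ord3P (k : 'I_3) : [\/ k = o0, k = o1 | k = o2].
Proof.
by case: k => [[|[|[|//]]] ?]; [apply: Or31 | apply: Or32 | apply: Or33]; apply: val_inj.
Qed.

Lemma sum3 (V : nmodType) (f : 'I_3 -> V) : \sum_k f k = f o0 + f o1 + f o2.
Proof.
by rewrite !big_ord_recl big_ord0 addr0 addrA; congr (f _ + f _ + f _); apply: val_inj.
Qed.

Lemma su2_commutators n (X : 'I_3 -> 'M[algC]_n) : su2_unitary_rep X ->
  [/\ mxcomm (X o0) (X o1) = X o2, mxcomm (X o1) (X o2) = X o0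
    & mxcomm (X o2) (X o0) = X o1].
Proof.
by move=> [_ XX]; split; rewrite /mxcomm XX sum3 /eps /= ?scale0r ?scale1r ?add0r ?addr0.
Qed.

Lemma su2_rep_lin_indep n (X : 'I_3 -> 'M[algC]_n) :
  su2_unitary_rep X -> ~ (forall k, X k = 0) -> mx_lin_indep X.
Proof.
move=> /su2_commutators [r01 r12 r20] X_neq0 c; rewrite sum3 => comb0.
have comb1 := comb0; rewrite -addrA addrC in comb1.
have comb2 := comb1; rewrite -addrA addrC in comb2.
have not_all0 : ~ [/\ X o0 = 0, X o1 = 0 & X o2 = 0].
  by case=> X0 X1 X2; apply: X_neq0 => k; case: (ord3P k) => ->.
have [c0|c0] := eqVneq (c o0) 0; last first.
  by case: not_all0; apply: (mxcomm_cycle_eq0 r01 r12 r20 comb0 c0).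
have [c1|c1] := eqVneq (c o1) 0; last first.
  by case: not_all0; case: (mxcomm_cycle_eq0 r12 r20 r01 comb1 c1).
have [c2|c2] := eqVneq (c o2) 0; last first.
  by case: not_all0; case: (mxcomm_cycle_eq0 r20 r01 r12 comb2 c2).
by move=> k; case: (ord3P k) => ->.
Qed.

Lemma su2_rep1_eq0 (X : 'I_3 -> 'M[algC]_1) : su2_unitary_rep X -> forall k, X k = 0.
Proof.
move=> /su2_commutators [r01 r12 r20].
have comm1 (A B : 'M[algC]_1) : mxcomm A B = 0.
  by apply/matrixP => i j; rewrite !ord1 !mxE !big_ord1 mulrC subrr.
by move=> k; case: (ord3P k) => ->; rewrite -?r01 -?r12 -?r20 comm1.
Qed.

Lemma irreducible_rep_neq0 n (X : 'I_3 -> 'M[algC]_n.+2) :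
  irreducible_rep X -> ~ (forall k, X k = 0).
Proof.
move=> irrX X0.
have stable k : stablemx (delta_mx 0 0 : 'M_n.+2) (X k)^T.
  by rewrite X0 trmx0 mulmx0 sub0mx.
by have := irrX _ stable; rewrite mxrank_delta.
Qed.

Section TensorProduct.
Variables (R : comPzRingType) (m n p q : nat).

Lemma tensmxDl (A B : 'M[R]_(m, n)) (C : 'M[R]_(p, q)) :
  (A + B) *t C = A *t C + B *t C.
Proof. by apply/matrixP => i j; rewrite !mxE mulrDl. Qed.

Lemma tensmxBl (A B : 'M[R]_(m, n)) (C : 'M[R]_(p, q)) :
  (A - B) *t C = A *t C - B *t C.
Proof. by apply/matrixP => i j; rewrite !mxE mulrBl. Qed.

Lemma tensmx_suml (I : Type) (r : seq I) (A : I -> 'M[R]_(m, n)) (C : 'M[R]_(p, q)) :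
  (\sum_(i <- r) A i) *t C = \sum_(i <- r) A i *t C.
Proof. by elim/big_rec2: _ => [|i B1 B2 _ <-]; rewrite ?tens0mx ?tensmxDl. Qed.

Lemma tensmx_lin_indep k (S : 'I_k -> 'M[R]_(p, q)) (A : 'I_k -> 'M[R]_(m, n)) :
  mx_lin_indep S -> \sum_l A l *t S l = 0 -> forall l, A l = 0.
Proof.
move=> indepS sum0 l; apply/matrixP => i j; rewrite [RHS]mxE.
apply: (indepS (fun l => A l i j)) => {l}; apply/matrixP => u v.
rewrite summxE [RHS]mxE.
transitivity ((\sum_l A l *t S l) (mxtens_index (i, u)) (mxtens_index (j, v))).
  by rewrite summxE; apply: eq_bigr => l _; rewrite tensmxE mxE.
by rewrite sum0 mxE.
Qed.

End TensorProduct.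

Lemma sigma_lin_indep : mx_lin_indep sigma.
Proof.
move=> c; rewrite sum3 => /matrixP comb.
have := comb 0 0; have := comb 0 1; have := comb 1 0.
rewrite !mxE /= !mulr1 !mulr0 !addr0 mulrN -expr2 sqrCi add0r mulrN1 opprK mulr1.
move=> e10 e01 e00.
have i_reg (x : algC) : x * 'i = 0 -> x = 0.
  by move/eqP; rewrite mulf_eq0 (negPf (neq0Ci algC)) orbF => /eqP.
have c1 : c o1 = 0.
  have : (c o0 * 'i - c o1) - (c o0 * 'i + c o1) = - c o1 *+ 2 by ring.
  by rewrite e10 e01 subrr => /eqP; rewrite eq_sym mulrn_eq0 oppr_eq0 => /eqP.
have c0 : c o0 = 0 by apply: i_reg; rewrite -e10 c1 subr0.
by move=> k; case: (ord3P k) => ->; rewrite ?c0 ?c1 ?(i_reg _ e00).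
Qed.

Section FuzzySphere.
Variables (N : nat) (rho : forall n : nat, 'I_3 -> 'M[algC]_n.+1).

Lemma Xsum_diag_entry k (i : 'I_N.+1) (a b : 'I_i.+1) :
  Xsum N rho k (tagnat.Rank i a) (tagnat.Rank i b) = rho i k a b.
Proof.
have /matrixP/(_ a b) <- := submxblock_diag (fun i : 'I_N.+1 => rho i k) i.
by rewrite [RHS]mxE.
Qed.

Lemma Xsum_spin0_eq0 : su2_unitary_rep (rho 0) ->
  forall k, Xsum N rho k (tagnat.Rank ord0 0) (tagnat.Rank ord0 0) = 0.
Proof. by move=> rho0 k; rewrite Xsum_diag_entry su2_rep1_eq0 ?mxE. Qed.

Lemma Xsum_lin_indep : (1 <= N)%N ->
  su2_unitary_rep (rho 1) -> irreducible_rep (rho 1) -> mx_lin_indep (Xsum N rho).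
Proof.
move=> N_gt0 rho1 irr1 c comb.
apply: (su2_rep_lin_indep rho1 (irreducible_rep_neq0 irr1)).
pose i1 : 'I_N.+1 := Ordinal (N_gt0 : (1 < N.+1)%N).
apply/matrixP => a b; rewrite summxE [RHS]mxE.
transitivity ((\sum_k c k *: Xsum N rho k) (tagnat.Rank i1 a) (tagnat.Rank i1 b)).
  rewrite summxE; apply: eq_bigr => k _.
  by rewrite [RHS]mxE (Xsum_diag_entry k (i:=i1)) mxE.
by rewrite comb mxE.
Qed.

Lemma act_mulmx_tens (a b : AN N) k : act a *m (b *t sigma k) = (a *m b) *t sigma k.
Proof. by rewrite /act tensmx_mul mul1mx. Qed.

Lemma act_esig k (a : AN N) : act a *m esig N k = a *t sigma k.
Proof. by rewrite act_mulmx_tens mulmx1. Qed.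

Lemma esig_act k (a : AN N) : esig N k *m act a = a *t sigma k.
Proof. by rewrite /act /esig tensmx_mul mulmx1 mul1mx. Qed.

Lemma dform_tens b : dform N rho b = \sum_k mxcomm (Xsum N rho k) b *t sigma k.
Proof.
rewrite /dform /Dirac mulmx_suml mulmx_sumr -sumrB; apply: eq_bigr => k _.
by rewrite tensmxBl /act !tensmx_mul mulmx1 mul1mx.
Qed.

Lemma sum_act_dform_esig (I : Type) (r : seq I) (a b : I -> AN N) :
  \sum_(i <- r) act (a i) *m dform N rho (b i) =
  \sum_k esig N k *m act (\sum_(i <- r) a i *m mxcomm (Xsum N rho k) (b i)).
Proof.
under eq_bigr do rewrite dform_tens mulmx_sumr.
under eq_bigr do under eq_bigr do rewrite act_mulmx_tens.
by rewrite exchange_big; apply: eq_bigr => k _; rewrite esig_act tensmx_suml.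
Qed.

Lemma one_form_seq (s : seq (AN N * AN N)) :
  one_form N rho (\sum_(x <- s) act x.1 *m dform N rho x.2).
Proof.
exists (size s), (fun j => (nth 0 s j).1), (fun j => (nth 0 s j).2).
by rewrite (big_nth 0) big_mkord.
Qed.

End FuzzySphere.

Theorem proposition8p1 (N : nat) (HN : (1 <= N)%N)
  (rho : forall n : nat, 'I_3 -> 'M[algC]_n.+1)
  (Hrep : forall n : nat, su2_unitary_rep (rho n))
  (Hirr : forall n : nat, irreducible_rep (rho n)) :
  (* the basis elements 1 (x) sigma_k are central *)
  (forall (k : 'I_3) (a : AN N), act a *m esig N k = esig N k *m act a) /\
  (* every right A_N-combination of the basis lies in Omega^1 *)
  (forall a : 'I_3 -> AN N,
      one_form N rho (\sum_(k < 3) esig N k *m act (a k))) /\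
  (* the basis spans Omega^1 as a right A_N-module *)
  (forall w : BH N, one_form N rho w ->
      exists a : 'I_3 -> AN N, w = \sum_(k < 3) esig N k *m act (a k)) /\
  (* the basis is free (right A_N-linearly independent) *)
  (forall a : 'I_3 -> AN N,
      \sum_(k < 3) esig N k *m act (a k) = 0 -> forall k, a k = 0).
Proof.
split; first by move=> k a; rewrite act_esig esig_act.
split.
  move=> a.
  have indepX := Xsum_lin_indep HN (Hrep 1%N) (Hirr 1%N).
  have [s fs] := bracket_span_all indepX (Xsum_spin0_eq0 N (Hrep 0%N)) a.
  under eq_bigr do rewrite fs.
  by rewrite -(sum_act_dform_esig rho _ fst snd); apply: one_form_seq.
split.
  move=> w [m [a [b ->]]].
  exists (fun k => \sum_(j < m) a j *m mxcomm (Xsum N rho k) (b j)).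
  exact: sum_act_dform_esig.
move=> a; under eq_bigr do rewrite esig_act.
exact: tensmx_lin_indep sigma_lin_indep.
Qed.
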